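(* Let $q$ be a prime power and $n\ge k\ge0$ integers. Let $V_1,\dots,V_k$ be subspaces of $\mathbb{F}_q^n$ such that $\dim\big(\sum_{i\in\Omega}V_i\big)\ge n-k+|\Omega|$ for all nonempty $\Omega\subseteq[k]$. Then there exist subspaces $V_i'\subseteq V_i$, $i=1,\dots,k$, such that (1) $\dim\big(\sum_{i\in\Omega}V_i'\big)\ge n-k+|\Omega|$ for all nonempty $\Omega\subseteq[k]$, and (2) $\dim V_i'=n-k+1$ for all $i\in[k]$. *)

From mathcomp Require Import all_boot all_order all_algebra all_field.
Set Implicit Arguments. Unset Strict Implicit. Unset Printing Implicit Defensive.

(* Call a nonempty set [A] of indices tight if [dim (sum_(i in A) V_i) = d + |A|].
   Under the Hall-type condition the dimension of these sums is submodular in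
   [A], so the tight sets containing a fixed [i] are closed under intersection
   and there is a least one, [T].  If [dim V_i >= d + 2], the subspaces [V_i]
   and [sum_(j in T \ i) V_j] meet nontrivially, and removing from [V_i] a line
   spanned by a vector [v] of this intersection preserves the condition: the
   sums over tight sets still contain [v], the others had one dimension to
   spare.  Iterating lowers [sum_i dim V_i] until every [V_i] has dimension
   [d + 1]. *)
From mathcomp Require Import all_boot all_order all_algebra all_field.
From mathcomp Require Import zify.
Import GRing.Theory.

Set Implicit Arguments.
Unset Strict Implicit.
Unset Printing Implicit Defensive.
Local Open Scope ring_scope.

Section SumsOfSubspaces.
Variables (K : fieldType) (vT : vectType K) (I : finType).
Implicit Types (V W : I -> {vspace vT}) (A B : {set I}).

Lemma sumvS V W A B : A \subset B -> (forall i, i \in A -> (V i <= W i)%VS) ->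
  (\sum_(i in A) V i <= \sum_(i in B) W i)%VS.
Proof.
move=> /subsetP AB VW; apply/subv_sumP => i iA.
exact: sumv_sup (AB i iA) (VW i iA).
Qed.

Lemma sumv_setD1 V A i : i \in A ->
  (\sum_(j in A) V j = V i + \sum_(j in A :\ i) V j)%VS.
Proof.
move=> iA; rewrite (bigD1 i) //=; congr (_ + _)%VS.
by apply: eq_bigl => j; rewrite in_setD1 andbC.
Qed.

Lemma dimv_sum_submod V A B :
  (\dim (\sum_(i in A :|: B) V i) + \dim (\sum_(i in A :&: B) V i)
     <= \dim (\sum_(i in A) V i) + \dim (\sum_(i in B) V i))%N.
Proof.
rewrite -[leqRHS]dimv_sum_cap; apply: leq_add; apply: dimvS.
  apply/subv_sumP => i; rewrite in_setU => /orP[iA|iB].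
    exact: subv_trans (sumv_sup i iA (subvv _)) (addvSl _ _).
  exact: subv_trans (sumv_sup i iB (subvv _)) (addvSr _ _).
by rewrite subv_cap !sumvS ?subsetIl ?subsetIr.
Qed.

End SumsOfSubspaces.

Section HallCondition.
Variables (K : fieldType) (vT : vectType K) (I : finType) (d : nat).
Implicit Types (V : I -> {vspace vT}) (A : {set I}).

Definition hall_condition V :=
  forall A, A != set0 -> (d + #|A| <= \dim (\sum_(i in A) V i))%N.

Definition tight V i A :=
  (i \in A) && (\dim (\sum_(j in A) V j) == d + #|A|)%N.

Lemma hall_condition_dim V : hall_condition V -> forall i, (d.+1 <= \dim (V i))%N.
Proof.
move=> hallV i; have := hallV [set i].
by rewrite big_set1 cards1 addn1; apply; apply/set0Pn; exists i; rewrite set11.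
Qed.

Variables (V : I -> {vspace vT}) (i : I).
Hypothesis hallV : hall_condition V.

Lemma tight_setI A B : tight V i A -> tight V i B -> tight V i (A :&: B).
Proof.
move=> /andP[iA /eqP tA] /andP[iB /eqP tB].
have iAB : i \in A :&: B by rewrite inE iA.
have ne_setI : A :&: B != set0 by apply/set0Pn; exists i.
have ne_setU : A :|: B != set0 by apply/set0Pn; exists i; rewrite inE iA.
rewrite /tight iAB eqn_leq (hallV ne_setI) andbT.
have := dimv_sum_submod V A B; have := hallV ne_setU; have := cardsUI A B.
rewrite tA tB; lia.
Qed.

Lemma least_tight A0 : tight V i A0 ->
  exists2 T, tight V i T & forall A, tight V i A -> T \subset A.
Proof.
move=> tA0; have [T tT minT] := arg_minnP (fun T : {set I} => #|T|) tA0.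
exists T => // A tA; have tAT := tight_setI tA tT.
suff <- : A :&: T = T by apply: subsetIl.
by apply/eqP; rewrite eqEcard subsetIr minT.
Qed.

Lemma exists_vector_in_tight_sums : (d.+2 <= \dim (V i))%N ->
  exists v, [/\ v \in V i, v != 0 &
    forall A, tight V i A -> v \in (\sum_(j in A :\ i) V j)%VS].
Proof.
move=> dimVi; have [[A0 tA0]|no_tight] := pickP (tight V i); last first.
  exists (vpick (V i)); split=> [||A]; last by rewrite no_tight.
    exact: memv_pick.
  by rewrite vpick0 -dimv_eq0 -lt0n (leq_trans _ dimVi).
have [T /andP[iT /eqP tT] minT] := least_tight tA0.
set W := (\sum_(j in T :\ i) V j)%VS.
have dimW : (#|T| <= \dim W + 1)%N.
  rewrite (cardsD1 i T) iT add1n addn1 ltnS /W.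
  have [->|neTi] := eqVneq (T :\ i) set0; first by rewrite cards0.
  exact: leq_trans (leq_addl _ _) (hallV neTi).
exists (vpick (V i :&: W)); have := memv_pick (V i :&: W).
rewrite memv_cap => /andP[vVi vW]; split => //.
  rewrite vpick0 -dimv_eq0 -lt0n.
  by have := dimv_sum_cap (V i) W; rewrite -sumv_setD1 // tT; lia.
move=> A tA; apply: subvP vW; apply: sumvS => //.
exact: setSD (minT A tA).
Qed.

Variable v : vT.
Hypotheses (vVi : v \in V i) (v_neq0 : v != 0).
Hypothesis v_tight : forall A, tight V i A -> v \in (\sum_(j in A :\ i) V j)%VS.

Local Notation V' := (@dfwith I (fun=> {vspace vT}) V i (V i :\: <[v]>)%VS).

Lemma dim_diffv_line : \dim (V' i) = (\dim (V i)).-1.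
Proof.
rewrite dfwith_in -(dimv_cap_compl (V i) <[v]>).
by rewrite (capv_idPr _) ?dim_vline ?v_neq0 // -memvE.
Qed.

Lemma diffv_line_subv j : (V' j <= V j)%VS.
Proof. by case: dfwithP => [|j' _]; rewrite ?diffvSl. Qed.

Lemma hall_condition_diffv_line : hall_condition V'.
Proof.
have V'_sub j : (V j <= V' j + <[v]>)%VS.
  by case: dfwithP => [|j' _]; rewrite ?addv_diff ?addvSl.
have V_V' A : i \notin A -> (\sum_(j in A) V' j = \sum_(j in A) V j)%VS.
  move=> iA; apply: eq_bigr => j jA.
  by rewrite dfwith_out //; apply: contraNneq iA => ->.
have sumV_sub A : (\sum_(j in A) V j <= \sum_(j in A) V' j + <[v]>)%VS.
  apply/subv_sumP => j jA; apply: subv_trans (V'_sub j) _.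
  by apply: addvS; rewrite ?subvv // (sumv_sup j).
move=> A neA; have [tA|ntA] := boolP (tight V i A).
  have v_sumV' : (<[v]> <= \sum_(j in A) V' j)%VS.
    rewrite -memvE; apply: subvP (v_tight tA); apply: sumvS => [|j].
      exact: subD1set.
    by rewrite in_setD1 => /andP[ji _]; rewrite dfwith_out // eq_sym.
  move: (sumV_sub A); rewrite (addv_idPl v_sumV') => /dimvS.
  exact: leq_trans (hallV neA).
have [iA|iA] := boolP (i \in A); last by rewrite V_V' //; apply: hallV.
have := dimvS (sumV_sub A); have := dimv_sum_cap (\sum_(j in A) V' j) <[v]>.
have := hallV neA; move: ntA; rewrite /tight iA dim_vline v_neq0 /= => /eqP; lia.
Qed.

End HallCondition.

Lemma exists_hall_subfamily_of_dim (K : fieldType) (vT : vectType K) (I : finType)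
    (d : nat) (V : I -> {vspace vT}) :
  hall_condition d V ->
  exists V' : I -> {vspace vT}, [/\ forall i, (V' i <= V i)%VS,
    hall_condition d V' & forall i, \dim (V' i) = d.+1].
Proof.
have [m] := ubnP (\sum_i \dim (V i)); elim: m V => // m IHm V /ltnSE dimV hallV.
have [i dimVi|dimV_eq] := pickP (fun i => \dim (V i) != d.+1); last first.
  by exists V; split=> [i|//|i]; [exact: subvv | apply/eqP/negbFE/dimV_eq].
have dimVi2 : (d.+2 <= \dim (V i))%N.
  by rewrite ltn_neqAle eq_sym dimVi (hall_condition_dim hallV).
have [v [vVi v0 v_tight]] := exists_vector_in_tight_sums hallV dimVi2.
pose W := @dfwith I (fun=> {vspace vT}) V i (V i :\: <[v]>)%VS.
have dimW : (\sum_j \dim (W j) < \sum_j \dim (V j))%N.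
  rewrite (bigD1 i) //= [ltnRHS](bigD1 i) //= dim_diffv_line //.
  rewrite -addSn prednK ?(leq_trans _ dimVi2) // leq_add // leq_sum // => j _.
  exact/dimvS/diffv_line_subv.
have [V' [sV'W hallV' dimV']] :=
  IHm W (leq_trans dimW dimV) (hall_condition_diffv_line hallV vVi v0 v_tight).
by exists V'; split=> // j; apply: subv_trans (sV'W j) (diffv_line_subv V i v j).
Qed.

Theorem mainTheorem10 (F : finFieldType) (n k : nat) (hkn : (k <= n)%N)
  (V : 'I_k -> {vspace 'rV[F]_n}) :
  (forall Om : {set 'I_k}, Om != set0 ->
     (n - k + #|Om| <= \dim (\sum_(i in Om) V i)%VS)%N) ->
  exists V' : 'I_k -> {vspace 'rV[F]_n},
    (forall i, (V' i <= V i)%VS) /\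
    (forall Om : {set 'I_k}, Om != set0 ->
       (n - k + #|Om| <= \dim (\sum_(i in Om) V' i)%VS)%N) /\
    (forall i, \dim (V' i) = (n - k + 1)%N).
Proof.
move=> hallV.
have [V' [sV'V hallV' dimV']] := exists_hall_subfamily_of_dim (d := n - k) hallV.
by exists V'; split=> //; split=> // i; rewrite dimV' addn1.
Qed.
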